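(* For every prime $p$ there exists a cyclic skew-symmetric linear $(2,p,p)$-AONT: that is, there exist $\tau\in\mathbb{F}_p$ and a $p\times p$ matrix $M$ over $\mathbb{F}_p$ such that $M$ is invertible, every $2\times2$ submatrix of $M$ is invertible, $M$ is in type $p$ standard form, $M$ is $\tau$-skew-symmetric, and $M$ is cyclic.
   Context: A linear $(t,s,q)$-AONT is given by an invertible $s\times s$ matrix $M$ over $\mathbb{F}_q$ (transform $(y_1,\dots,y_s)=(x_1,\dots,x_s)M^{-1}$); $M$ defines one iff every $t\times t$ submatrix is invertible. A $q\times q$ matrix $M$ (rows/columns indexed $1,\dots,q$) is in type $q$ standard form if all its diagonal entries are $0$ and all off-diagonal entries of the first row and first column are $1$. Such an $M$ is $\tau$-skew-symmetric if $M(i,j)+M(j,i)=\tau$ for all $2\le i,j\le q$ with $i\ne j$, and it is cyclic if its lower right $(q-1)\times(q-1)$ submatrix is a circulant matrix (each row is the cyclic shift by one position to the right of the previous row). ''Skew-symmetric'' means $\tau$-skew-symmetric for some $\tau$. *)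

From mathcomp Require Import all_boot all_algebra.
Set Implicit Arguments. Unset Strict Implicit. Unset Printing Implicit Defensive.
Import GRing.Theory.
Local Open Scope ring_scope.

(* Rows/columns are indexed by 'I_n = {0,...,n-1}; the paper's index k
   (1 <= k <= n) corresponds to our index k-1. *)

Section AONT.
Variables (F : fieldType) (n : nat).

Definition all_tsub_invertible (t : nat) (M : 'M[F]_n) : Prop :=
  forall (f g : 'I_t -> 'I_n), injective f -> injective g ->
    mxsub f g M \in unitmx.

Definition linear_AONT (t : nat) (M : 'M[F]_n) : Prop :=
  M \in unitmx /\ all_tsub_invertible t M.

Definition std_form (M : 'M[F]_n) : Prop :=
  (forall i : 'I_n, M i i = 0) /\
  (forall i j : 'I_n, nat_of_ord i = 0%N -> nat_of_ord j != 0%N ->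
      M i j = 1 /\ M j i = 1).

Definition skew_sym (tau : F) (M : 'M[F]_n) : Prop :=
  forall i j : 'I_n, nat_of_ord i != 0%N -> nat_of_ord j != 0%N -> i != j ->
    M i j + M j i = tau.

Definition csucc (j : nat) : nat := if (j.+1 < n)%N then j.+1 else 1%N.

(* the lower-right (n-1)x(n-1) block is circulant: each row is the
   cyclic right shift by one of the previous row. *)
Definition cyclic_mx (M : 'M[F]_n) : Prop :=
  forall i i' j j' : 'I_n, (0 < i)%N -> (0 < j)%N ->
    nat_of_ord i' = i.+1 -> nat_of_ord j' = csucc j ->
    M i' j' = M i j.

End AONT.

From mathcomp Require Import all_boot all_algebra.
From mathcomp Require Import perm cyclic finfield ring zify.
Import GRing.Theory.
Local Open Scope ring_scope.

Set Implicit Arguments. Unset Strict Implicit. Unset Printing Implicit Defensive.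

(* Index rows and columns by the elements of F_p, listed as 0, 1, z, ...,
   z^(p-2) for a generator z of F_p^*, and put M(a,a) = 0, M(a,0) = 1 and
   M(a,b) = b/(b-a) otherwise.  Skew-symmetry with tau = 1 is
   b/(b-a) + a/(a-b) = 1, the lower block is circulant because M(za,zb) =
   M(a,b), and the 2 x 2 minors are nonzero by a cross-ratio computation.
   For invertibility, M(a,b) is the value on F_p of the polynomial
   sum_(k<p-1) (k+1) a^k b^(p-1-k) + a^(p-1) - a^(p-1) b^(p-1), so that
   M = V^T T W with V, W Vandermonde and T triangular with diagonal
   1, 2, ..., p-1, 1. *)

Lemma det_mx22 (R : comNzRingType) (A : 'M[R]_2) :
  \det A = A 0 0 * A 1 1 - A 0 1 * A 1 0.
Proof.
rewrite (expand_det_row _ 0) !big_ord_recl big_ord0 /cofactor !det_mx11 !mxE /=.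
rewrite expr0 expr1 !mul1r mulN1r addr0 mulrN.
by congr (A _ _ * A _ _ - A _ _ * A _ _); apply/val_inj.
Qed.

Lemma unitmx_of_tsub (F : fieldType) n (M : 'M[F]_n) :
  all_tsub_invertible n M -> M \in unitmx.
Proof. by move=> /(_ id id (fun _ _ => id) (fun _ _ => id)); rewrite mxsub_id. Qed.

Lemma Vandermonde_unit (F : fieldType) n (a : 'rV[F]_n) :
  injective (a 0) -> Vandermonde n a \in unitmx.
Proof.
move=> a_inj; rewrite unitmxE det_Vandermonde unitfE.
apply/prodf_neq0 => i _; apply/prodf_neq0 => j ij; rewrite subr_eq0 (inj_eq a_inj).
by apply: contraTneq ij => ->; rewrite ltnn.
Qed.

Lemma weighted_geometric_sum (R : comNzRingType) (a b : R) n :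
  (b - a) * \sum_(k < n) k.+1%:R * a ^+ k * b ^+ (n - k)
  = b * (\sum_(k < n.+1) a ^+ k * b ^+ (n - k) - n.+1%:R * a ^+ n).
Proof.
elim: n => [|n IHn].
  by rewrite big_ord0 big_ord1 !expr0 mulr1 subrr !mulr0.
have pull_b (f : 'I_n.+1 -> R) : \sum_(k < n.+1) f k * b ^+ (n.+1 - k)
    = b * \sum_(k < n.+1) f k * b ^+ (n - k).
  rewrite mulr_sumr; apply: eq_bigr => k _.
  by rewrite subSn ?exprS 1?mulrCA // -ltnS.
rewrite pull_b big_ord_recr [in RHS]big_ord_recr pull_b /= !subnn !expr0 !mulr1.
by rewrite mulrCA mulrDr IHn exprS; ring.
Qed.

Lemma prim_root_neq0 (F : idomainType) n (z : F) :
  n.-primitive_root z -> z != 0.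
Proof.
by move=> z_prim; rewrite (prim_root_eq0 z_prim) -lt0n (prim_order_gt0 z_prim).
Qed.

Lemma finField_prim_root (F : finFieldType) :
  exists z : F, (#|F|.-1).-primitive_root z.
Proof.
have card_gt1 := card_finNzRing_gt1 F.
have /hasP[z _ z_prim] : has (#|F|.-1).-primitive_root (enum (predC1 (0 : F))).
  apply: has_prim_root; [by rewrite -subn1 subn_gt0 | | exact: enum_uniq |].
    apply/allP => c; rewrite mem_enum => c_neq0; apply/unity_rootP.
    by apply: (mulfI c_neq0); rewrite -exprS prednK ?expf_card ?mulr1 // ltnW.
  by rewrite -cardE cardC1.
by exists z.
Qed.

Section Entry.
Variable F : fieldType.
Implicit Types a b c : F.

Definition aont_entry a b : F :=
  if a == b then 0 else if b == 0 then 1 else b / (b - a).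

Lemma aont_entry_id a : aont_entry a a = 0.
Proof. by rewrite /aont_entry eqxx. Qed.

Lemma aont_entry0r a : a != 0 -> aont_entry a 0 = 1.
Proof. by move=> a0; rewrite /aont_entry (negbTE a0) eqxx. Qed.

Lemma aont_entry_div a b : a != b -> b != 0 -> aont_entry a b = b / (b - a).
Proof. by move=> ab b0; rewrite /aont_entry (negbTE ab) (negbTE b0). Qed.

Lemma aont_entry0l b : b != 0 -> aont_entry 0 b = 1.
Proof. by move=> b0; rewrite aont_entry_div ?subr0 ?divff // eq_sym. Qed.

Lemma aont_entry_eq0 a b : (aont_entry a b == 0) = (a == b).
Proof.
rewrite /aont_entry; have [_|ab] := eqVneq a b; first by rewrite eqxx.
have [_|b0] := eqVneq b 0; first by rewrite oner_eq0.
by rewrite mulf_eq0 invr_eq0 subr_eq0 (negbTE b0) eq_sym (negbTE ab).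
Qed.

Lemma aont_entry_skew a b : a != 0 -> b != 0 -> a != b ->
  aont_entry a b + aont_entry b a = 1.
Proof.
move=> a0 b0 ab; have ba : b != a by rewrite eq_sym.
by rewrite !aont_entry_div //; field; rewrite !subr_eq0 ab ba.
Qed.

Lemma aont_entryZ c a b : c != 0 -> aont_entry (c * a) (c * b) = aont_entry a b.
Proof.
move=> c0; rewrite /aont_entry (inj_eq (mulfI c0)) mulf_eq0 (negbTE c0) /=.
case: eqVneq => // ab; case: eqVneq => // b0.
by rewrite -mulrBr invfM mulrACA divff // mul1r.
Qed.

Lemma aont_entry_minor a1 a2 b1 b2 : a1 != a2 -> b1 != b2 ->
  aont_entry a1 b1 * aont_entry a2 b2 != aont_entry a1 b2 * aont_entry a2 b1.
Proof.
move=> a12 b12.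
have [e|a1b1] := eqVneq a1 b1.
  by subst; rewrite aont_entry_id mul0r eq_sym mulf_neq0 ?aont_entry_eq0 // eq_sym.
have [e|a2b2] := eqVneq a2 b2.
  by subst; rewrite aont_entry_id mulr0 eq_sym mulf_neq0 ?aont_entry_eq0 // eq_sym.
have [e|a1b2] := eqVneq a1 b2.
  by subst; rewrite aont_entry_id mul0r mulf_neq0 ?aont_entry_eq0.
have [e|a2b1] := eqVneq a2 b1.
  by subst; rewrite aont_entry_id mulr0 mulf_neq0 ?aont_entry_eq0.
wlog b1_neq0 : b1 b2 b12 a1b1 a2b2 a1b2 a2b1 / b1 != 0.
  move=> wlog_b1; have [b10|] := eqVneq b1 0; last exact: wlog_b1.
  by rewrite eq_sym wlog_b1 // eq_sym -?b10.
rewrite aont_entry_div // [aont_entry a2 b1]aont_entry_div //.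
have [b20|b2_neq0] := eqVneq b2 0.
  subst b2; rewrite !aont_entry0r // mulr1 mul1r.
  by apply: contra a12 => /eqP /(mulfI b1_neq0) /invr_inj /addrI /oppr_inj ->.
rewrite !aont_entry_div // -subr_eq0.
have -> : b1 / (b1 - a1) * (b2 / (b2 - a2)) - b2 / (b2 - a1) * (b1 / (b1 - a2))
    = b1 * b2 * (a1 - a2) * (b2 - b1)
      / ((b1 - a1) * (b2 - a2) * (b2 - a1) * (b1 - a2)).
  field.
  by rewrite !subr_eq0 ![_ == a1]eq_sym ![_ == a2]eq_sym a1b1 a2b2 a1b2 a2b1.
by rewrite !(mulf_neq0, invr_eq0) // subr_eq0 // eq_sym.
Qed.

End Entry.

Section PointMatrix.
Variables (F : fieldType) (m : nat) (x : 'I_m -> F).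
Hypothesis x_inj : injective x.

Definition aont_mx : 'M[F]_m := \matrix_(i, j) aont_entry (x i) (x j).

Lemma aont_mx_sub2 : all_tsub_invertible 2 aont_mx.
Proof.
move=> f g f_inj g_inj; rewrite unitmxE unitfE det_mx22 !mxE subr_eq0.
by apply: aont_entry_minor; rewrite (inj_eq x_inj) ?(inj_eq f_inj) ?(inj_eq g_inj).
Qed.

Hypothesis x_eq0 : forall i, (x i == 0) = (i == 0 :> nat).

Lemma aont_mx_std : std_form aont_mx.
Proof.
split=> [i|i j /eqP i0 j0]; first by rewrite mxE aont_entry_id.
rewrite -!x_eq0 in i0 j0.
by rewrite !mxE (eqP i0) aont_entry0r // aont_entry0l.
Qed.

Lemma aont_mx_skew : skew_sym 1 aont_mx.
Proof.
by move=> i j i0 j0 ij; rewrite !mxE aont_entry_skew ?x_eq0 ?(inj_eq x_inj).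
Qed.

Lemma aont_mx_cyclic (g : F) : g != 0 ->
    (forall i i' : 'I_m, (0 < i)%N -> i' = csucc m i :> nat -> x i' = g * x i) ->
  cyclic_mx aont_mx.
Proof.
move=> g0 x_succ i i' j j' i0 j0 ii' jj'.
have i_succ : i' = csucc m i :> nat by rewrite /csucc -ii' ltn_ord.
by rewrite !mxE (x_succ i i') // (x_succ j j') // aont_entryZ.
Qed.

End PointMatrix.

Section RootPoints.
Variables (F : fieldType) (n : nat) (z : F).
Hypothesis z_prim : n.-primitive_root z.

Definition root_points (i : 'I_n.+1) : F :=
  if i == 0 :> nat then 0 else z ^+ i.-1.

Let z_neq0 : z != 0 := prim_root_neq0 z_prim.

Lemma root_points_eq0 i : (root_points i == 0) = (i == 0 :> nat).
Proof.
rewrite /root_points; case: (i == 0 :> nat); first by rewrite eqxx.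
by rewrite expf_eq0 (negbTE z_neq0) andbF.
Qed.

Lemma root_points_inj : injective root_points.
Proof.
move=> i j eij; apply/ord_inj/eqP.
have [i0|i0] := eqVneq (i : nat) 0%N.
  by rewrite i0 eq_sym -root_points_eq0 -eij root_points_eq0 i0.
have j0 : (j : nat) != 0%N by rewrite -root_points_eq0 -eij root_points_eq0.
move: eij; rewrite /root_points (negbTE i0) (negbTE j0) => /eqP.
rewrite (eq_prim_root_expr z_prim) !modn_small => [/eqP||];
  by have := ltn_ord i; have := ltn_ord j; lia.
Qed.

Lemma root_points_succ (i i' : 'I_n.+1) :
  (0 < i)%N -> i' = csucc n.+1 i :> nat -> root_points i' = z * root_points i.
Proof.
move=> i_gt0 i'E; rewrite /root_points i'E /csucc (gtn_eqF i_gt0) -exprS prednK //.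
case: ltnP => //= i_ge; have -> : nat_of_ord i = n by have := ltn_ord i; lia.
by rewrite (prim_expr_order z_prim).
Qed.

End RootPoints.

Section Expansion.
Variables (F : fieldType) (n : nat).
Hypotheses (charF : n.+1%:R = 0 :> F) (fermatF : forall c : F, c ^+ n.+1 = c).
Hypothesis bin2F : 'C(n.+1, 2)%:R = 0 :> F.

Let n_gt0 : (0 < n)%N.
Proof. by case: n charF => // /eqP; rewrite oner_eq0. Qed.

Let expf_unit (c : F) : c != 0 -> c ^+ n = 1.
Proof. by move=> c0; apply: (mulfI c0); rewrite -exprS fermatF mulr1. Qed.

Let geometric_sum_eq1 (a b : F) :
  a != b -> \sum_(k < n.+1) a ^+ k * b ^+ (n - k) = 1.
Proof.
move=> ab; have ba : b - a != 0 by rewrite subr_eq0 eq_sym.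
apply: (mulfI ba); rewrite mulr1; symmetry.
rewrite -[in LHS](fermatF a) -[in LHS](fermatF b) subrXX.
by congr (_ * _); apply: eq_bigr => k _; rewrite mulrC.
Qed.

Lemma aont_entry_expand (a b : F) : aont_entry a b =
  \sum_(k < n) k.+1%:R * a ^+ k * b ^+ (n - k) + a ^+ n - a ^+ n * b ^+ n.
Proof.
have [<-|ab] := eqVneq a b.
  under eq_bigr => k _ do rewrite -mulrA -exprD subnKC 1?ltnW //.
  rewrite -mulr_suml -natr_sum.
  have -> : (\sum_(k < n) k.+1)%N = 'C(n.+1, 2).
    by rewrite -bin2_sum big_mkord big_ord_recl.
  rewrite aont_entry_id bin2F mul0r add0r.
  have [->|a0] := eqVneq a 0; first by rewrite expr0n gtn_eqF // mulr0n mulr0 subrr.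
  by rewrite expf_unit // mulr1 subrr.
set S := \sum_(k < n) _.
have S_val : S = b / (b - a).
  have ba : b - a != 0 by rewrite subr_eq0 eq_sym.
  apply: (mulfI ba); rewrite weighted_geometric_sum geometric_sum_eq1 // charF.
  by rewrite mul0r subr0 mulr1 mulrC divfK.
have [b0|b0] := eqVneq b 0.
  subst b; rewrite S_val aont_entry0r // expf_unit // expr0n gtn_eqF //.
  by rewrite mulr0n !mul0r mulr0 add0r subr0.
by rewrite S_val aont_entry_div // (expf_unit b0) mulr1 addrK.
Qed.

(* Row k holds the coefficients of a ^+ k and column l those of b ^+ (n - l),
   which makes the matrix lower triangular; hence the row-reversed
   Vandermonde factor in aont_mx_factor. *)
Definition aont_coef : 'M[F]_n.+1 :=
  diag_mx (\row_k if (k < n)%N then k.+1%:R else 1) - delta_mx ord_max 0.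

Lemma aont_mx_factor m (x : 'I_m -> F) :
  let V := Vandermonde n.+1 (\row_i x i) in
  aont_mx x = V^T *m aont_coef *m row_perm (perm (@rev_ord_inj n.+1)) V.
Proof.
move=> V; set W := row_perm _ V.
have W_E k j : W k j = x j ^+ (n - k).
  by rewrite !mxE permE /=; congr (_ ^+ _); have := ltn_ord k; lia.
have rank1_part :
    V^T *m delta_mx ord_max 0 *m W = \matrix_(i, j) (x i ^+ n * x j ^+ n).
  rewrite -(mul_delta_mx (0 : 'I_1)) mulmxA -colE -mulmxA -rowE.
  by apply/matrixP => i j; rewrite !mxE big_ord1 !mxE permE /= subn1.
apply/matrixP => i j; rewrite mulmxBr mulmxBl rank1_part mul_mx_diag !mxE.
under eq_bigr => k _ do rewrite W_E !mxE.
rewrite big_ord_recr /= ltnn subnn expr0 !mulr1 aont_entry_expand.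
congr (_ + _ - _); apply: eq_bigr => k _; rewrite ltn_ord.
by rewrite [_ * k.+1%:R]mulrC.
Qed.

Lemma aont_coef_unit : (forall k, (k < n)%N -> k.+1%:R != 0 :> F) ->
  aont_coef \in unitmx.
Proof.
move=> coef_neq0.
have coef_trig : is_trig_mx aont_coef.
  apply/is_trig_mxP => k l kl.
  have [k_neq_l l_neq0] : k != l /\ l != 0.
    by rewrite -!val_eqE /= !neq_ltn kl (leq_ltn_trans _ kl).
  by rewrite !mxE (negbTE k_neq_l) (negbTE l_neq0) andbF mulr0n subrr.
rewrite unitmxE (det_trig coef_trig) unitfE; apply/prodf_neq0 => k _.
have not_max0 : (k == ord_max) && (k == 0) = false.
  by case: eqP => // ->; rewrite -val_eqE /= gtn_eqF.
rewrite !mxE eqxx mulr1n not_max0 subr0.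
case: ifP => [/coef_neq0 //|_]; exact: oner_neq0.
Qed.

Lemma aont_mx_unit (x : 'I_n.+1 -> F) : injective x ->
  (forall k, (k < n)%N -> k.+1%:R != 0 :> F) -> aont_mx x \in unitmx.
Proof.
move=> x_inj coef_neq0.
have V_unit : Vandermonde n.+1 (\row_i x i) \in unitmx.
  by apply: Vandermonde_unit => i j; rewrite !mxE => /x_inj.
rewrite aont_mx_factor row_permE !unitmx_mul unitmx_tr unitmx_perm V_unit.
by rewrite aont_coef_unit.
Qed.

End Expansion.

Lemma aont_mx_Fp_unit n (x : 'I_n.+1 -> 'F_n.+1) : prime n.+1 -> injective x ->
  aont_mx x \in unitmx.
Proof.
move=> p_prime x_inj; have [n1|n_neq1] := eqVneq n 1.
  (* For p = 2 the expansion fails ('C(2, 2) = 1), but M is its own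
     2 x 2 submatrix. *)
  by subst n; apply/unitmx_of_tsub/aont_mx_sub2.
have dvd_char k : ((k%:R : 'F_n.+1) == 0) = (n.+1 %| k)%N.
  exact/esym/(dvdn_pcharf (pchar_Fp p_prime)).
apply: (aont_mx_unit _ _ _ x_inj) => [|c||k k_lt_n].
- exact: pchar_Fp_0.
- by rewrite -{2}(expf_card c) card_Fp.
- by apply/eqP; rewrite dvd_char prime_dvd_bin //; have := prime_gt1 p_prime; lia.
by rewrite dvd_char gtnNdvd.
Qed.

Theorem corollary2p21 (p : nat) (hp : prime p) :
  exists (tau : 'F_p) (M : 'M['F_p]_p),
    linear_AONT 2 M /\ std_form M /\ skew_sym tau M /\ cyclic_mx M.
Proof.
case: p hp => [//|n] p_prime.
have [z z_prim] : exists z : 'F_n.+1, n.-primitive_root z.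
  by have := finField_prim_root 'F_n.+1; rewrite card_Fp.
have x_inj := root_points_inj z_prim.
exists 1, (aont_mx (root_points z)); split; [|split; [|split]].
- by split; [apply: aont_mx_Fp_unit | apply: aont_mx_sub2].
- exact/aont_mx_std/root_points_eq0.
- exact/aont_mx_skew/root_points_eq0.
exact: aont_mx_cyclic (prim_root_neq0 z_prim) (root_points_succ z_prim).
Qed.
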